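(* Let $\phi:G\to G$ be any endomorphism of any group $G$, and let $H$ be a subgroup of $G$ such that $\phi(H)\subset H$ and for every $x\in G$ there is $n\in\mathbb N$ with $\phi^n(x)\in H$. Let $\phi_H:H\to H$ be the restriction of $\phi$. Then $R(\phi)=R(\phi_H)$. If all the numbers $R(\phi^n)$ are finite, then $R_\phi(z)=R_{\phi_H}(z)$.
   Context: For an endomorphism $\phi$ of a group $G$, two elements $\alpha,\beta\in G$ are $\phi$-conjugate if $\beta=g\alpha\phi(g)^{-1}$ for some $g\in G$; the Reidemeister number $R(\phi)$ is the number of $\phi$-conjugacy classes, and the Reidemeister zeta function is $R_\phi(z)=\exp\left(\sum_{n\ge1}\frac{R(\phi^n)}{n}z^n\right)$. *)

From Stdlib Require Import ClassicalEpsilon ProofIrrelevance.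
From mathcomp Require Import all_boot all_order all_algebra.
Set Implicit Arguments. Unset Strict Implicit. Unset Printing Implicit Defensive.
Import GRing.Theory.
Local Open Scope ring_scope.

Record group := Group {
  gcar :> Type;
  gmul : gcar -> gcar -> gcar;
  gone : gcar;
  ginv : gcar -> gcar;
  gmulA : forall x y z, gmul x (gmul y z) = gmul (gmul x y) z;
  gmul1 : forall x, gmul gone x = x;
  gmulV : forall x, gmul (ginv x) x = gone
}.
Arguments gmul {g}. Arguments gone {g}. Arguments ginv {g}.

Definition is_endo (G : group) (phi : G -> G) : Prop :=
  forall x y : G, phi (gmul x y) = gmul (phi x) (phi y).

Definition twisted_conj (G : group) (phi : G -> G) (a b : G) : Prop :=
  exists g : G, b = gmul (gmul g a) (ginv (phi g)).

Definition reid_class (G : group) (phi : G -> G) (a : G) : G -> Prop :=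
  twisted_conj phi a.

Definition reid_classes (G : group) (phi : G -> G) : Type :=
  {C : G -> Prop | exists a : G, C = reid_class phi a}.

Definition has_n_classes (G : group) (phi : G -> G) (n : nat) : Prop :=
  exists f : 'I_n -> reid_classes phi, bijective f.

(* Reidemeister number R(phi): Some n if there are exactly n classes,
   None (= infinity) if there are infinitely many. *)
Definition reid_number (G : group) (phi : G -> G) : option nat :=
  match excluded_middle_informative (exists n, has_n_classes phi n) with
  | left h => Some (proj1_sig (constructive_indefinite_description _ h))
  | right _ => None
  end.

Section Sub.
Variables (G : group) (H : G -> Prop) (H1 : H gone)
  (HM : forall x y, H x -> H y -> H (gmul x y)) (HV : forall x, H x -> H (ginv x)).

Definition sub_car := {x : G | H x}.
Definition sub_mul (x y : sub_car) : sub_car :=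
  exist _ (gmul (proj1_sig x) (proj1_sig y)) (HM (proj2_sig x) (proj2_sig y)).
Definition sub_one : sub_car := exist _ gone H1.
Definition sub_inv (x : sub_car) : sub_car := exist _ (ginv (proj1_sig x)) (HV (proj2_sig x)).

Lemma sub_eq (x y : sub_car) : proj1_sig x = proj1_sig y -> x = y.
Proof. case: x => x hx; case: y => y hy /= e; subst y; by rewrite (proof_irrelevance _ hx hy). Qed.

Lemma sub_mulA x y z : sub_mul x (sub_mul y z) = sub_mul (sub_mul x y) z.
Proof. apply: sub_eq; exact: gmulA. Qed.
Lemma sub_mul1 x : sub_mul sub_one x = x.
Proof. apply: sub_eq; exact: gmul1. Qed.
Lemma sub_mulV x : sub_mul (sub_inv x) x = sub_one.
Proof. apply: sub_eq; exact: gmulV. Qed.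

Definition subgroup : group := Group sub_mulA sub_mul1 sub_mulV.

Definition restrict (phi : G -> G) (Hphi : forall x, H x -> H (phi x))
  : subgroup -> subgroup :=
  fun x => exist _ (phi (proj1_sig x)) (Hphi _ (proj2_sig x)).
End Sub.

(* Formal power series over rat are represented by their coefficient
   sequences.  For a : nat -> rat, exp_coef a N is the N-th coefficient of
   exp (\sum_{n>=1} a n / n * z^n) = \sum_k (\sum_{n>=1} a n/n z^n)^k / k!.
   Only the terms n <= N and k <= N contribute to the N-th coefficient. *)
Definition log_poly (a : nat -> rat) (N : nat) : {poly rat} :=
  \sum_(1 <= n < N.+1) (a n / n%:R) *: 'X^n.
Definition exp_coef (a : nat -> rat) (N : nat) : rat :=
  (\sum_(k < N.+1) ((k`!)%:R)^-1 *: (log_poly a N ^+ k))`_N.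

(* Reidemeister zeta function R_phi(z), as its coefficient sequence;
   meaningful when all R(phi^n), n >= 1, are finite. *)
Definition reid_zeta (G : group) (phi : G -> G) : nat -> rat :=
  exp_coef (fun n => (odflt 0%N (reid_number (iter n phi)))%:R).

(* Every phi-conjugacy class of G meets H: a ~ phi^n(a) always, and phi^n(a)
   lies in H for some n.  Two elements of H that are phi-conjugate in G by g
   remain so after applying phi^n, and then the conjugator phi^n(g) lies in H;
   since a ~ phi_H^n(a) inside H, they are already phi_H-conjugate.  Hence
   inclusion induces a bijection between the Reidemeister classes of phi_H and
   of phi, and the same applies to every power phi^n, whose restriction is
   (phi_H)^n. *)
From mathcomp Require Import all_boot all_order all_algebra.
From Stdlib Require Import ClassicalEpsilon ProofIrrelevance.
From Stdlib Require Import FunctionalExtensionality PropExtensionality.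
Set Implicit Arguments. Unset Strict Implicit. Unset Printing Implicit Defensive.

Section EquivalenceClasses.
Variables (T : Type) (R : T -> T -> Prop).
Hypotheses (R_refl : forall x, R x x) (R_sym : forall x y, R x y -> R y x)
  (R_trans : forall x y z, R x y -> R y z -> R x z).

Definition eq_classes : Type := {C : T -> Prop | exists a, C = R a}.

Definition class_of (a : T) : eq_classes := exist _ (R a) (ex_intro _ a erefl).

Definition transversal n (r : 'I_n -> T) : Prop :=
  (forall x, exists i, R (r i) x) /\ (forall i j, R (r i) (r j) -> i = j).

Lemma eq_class a b : R a b -> R a = R b.
Proof.
move=> Rab; apply: functional_extensionality => x.
apply: propositional_extensionality; split; last exact: R_trans.
by apply: R_trans; apply: R_sym.
Qed.

Lemma class_of_inj a b : class_of a = class_of b -> R a b.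
Proof. by move/(f_equal (@proj1_sig _ _)) => /= ->. Qed.

Lemma eq_classes_inj (C D : eq_classes) : proj1_sig C = proj1_sig D -> C = D.
Proof. by apply: eq_sig_hprop => ? ? ?; apply: proof_irrelevance. Qed.

Lemma card_eq_classesP n :
  (exists f : 'I_n -> eq_classes, bijective f) <-> exists r : 'I_n -> T, transversal r.
Proof.
split.
- case=> f [g fK gK].
  have [r rP] : exists r : 'I_n -> T, forall i, proj1_sig (f i) = R (r i).
    apply: (choice (fun i a => proj1_sig (f i) = R a)) => i.
    by have [a ->] := proj2_sig (f i); exists a.
  exists r; split.
  + move=> x; exists (g (class_of x)).
    by rewrite -rP gK; apply: R_refl.
  + move=> i j Rij; apply: (can_inj fK); apply: eq_classes_inj.
    by rewrite !rP; apply: eq_class.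
- case=> r [r_cover r_sep]; pose f i := class_of (r i).
  have f_inj : injective f by move=> i j /class_of_inj; apply: r_sep.
  have [g gK] : exists g : eq_classes -> 'I_n, cancel g f.
    apply: (choice (fun C i => f i = C)) => C.
    have [a Ca] := proj2_sig C; have [i Ria] := r_cover a.
    by exists i; apply: eq_classes_inj; rewrite Ca; apply: eq_class.
  by exists f; exists g => // i; apply: f_inj; rewrite gK.
Qed.

End EquivalenceClasses.

Section TransversalTransfer.
Variables (A B : Type) (RA : A -> A -> Prop) (RB : B -> B -> Prop) (f : A -> B).
Hypotheses (RB_sym : forall x y, RB x y -> RB y x)
  (RB_trans : forall x y z, RB x y -> RB y z -> RB x z).
Hypotheses (f_hom : forall a a', RA a a' -> RB (f a) (f a'))
  (f_refl : forall a a', RB (f a) (f a') -> RA a a')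
  (f_ess_surj : forall b, exists a, RB (f a) b).

Lemma transversal_transfer n :
  (exists r : 'I_n -> A, transversal RA r) <-> (exists r : 'I_n -> B, transversal RB r).
Proof.
split.
- case=> r [r_cover r_sep]; exists (f \o r); split.
  + move=> b; have [a Rab] := f_ess_surj b; have [i Ria] := r_cover a.
    by exists i; apply: RB_trans Rab; apply: f_hom.
  + by move=> i j /f_refl; apply: r_sep.
- case=> r [r_cover r_sep].
  have [s sP] : exists s : 'I_n -> A, forall i, RB (f (s i)) (r i).
    by apply: (choice (fun i a => RB (f a) (r i))) => i; apply: f_ess_surj.
  exists s; split.
  + move=> a; have [i Ria] := r_cover (f a); exists i.
    by apply: f_refl; apply: RB_trans Ria.
  + move=> i j /f_hom Rij; apply: r_sep.
    by apply: RB_trans (sP j); apply: RB_trans Rij; apply: RB_sym.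
Qed.

End TransversalTransfer.

Lemma has_n_classes_uniq (G : group) (psi : G -> G) n m :
  has_n_classes psi n -> has_n_classes psi m -> n = m.
Proof.
case=> f f_bij [g [g' gK g'K]].
have g'_bij : bijective g' by exists g.
by have := bij_eq_card (bij_comp g'_bij f_bij); rewrite !card_ord.
Qed.

Lemma eq_reid_number (G G' : group) (psi : G -> G) (psi' : G' -> G') :
  (forall n, has_n_classes psi n <-> has_n_classes psi' n) ->
  reid_number psi = reid_number psi'.
Proof.
move=> E; rewrite /reid_number.
case: excluded_middle_informative => [h|h]; case: excluded_middle_informative => [h'|h'].
- congr Some; apply: (@has_n_classes_uniq _ psi).
  + exact: proj2_sig (constructive_indefinite_description _ h).
  + by apply/E; apply: proj2_sig (constructive_indefinite_description _ h').
- by exfalso; apply: h'; case: h => n /E; exists n.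
- by exfalso; apply: h; case: h' => n /E; exists n.
- by [].
Qed.

Section Groups.
Variable G : group.
Implicit Types x y z : G.

Lemma gmulVr x : gmul x (ginv x) = gone.
Proof.
rewrite -[gmul x (ginv x)]gmul1 -{1}(gmulV (ginv x)).
by rewrite -gmulA (gmulA (ginv x)) gmulV gmul1 gmulV.
Qed.

Lemma gmulr1 x : gmul x gone = x.
Proof. by rewrite -(gmulV x) gmulA gmulVr gmul1. Qed.

Lemma gmulI x y z : gmul x y = gmul x z -> y = z.
Proof. by move=> e; rewrite -(gmul1 y) -(gmulV x) -gmulA e gmulA gmulV gmul1. Qed.

Lemma ginv_uniq x y : gmul x y = gone -> y = ginv x.
Proof. by move=> e; apply: (@gmulI x); rewrite e gmulVr. Qed.

Lemma ginvM x y : ginv (gmul x y) = gmul (ginv y) (ginv x).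
Proof. by symmetry; apply: ginv_uniq; rewrite -gmulA (gmulA y) gmulVr gmul1 gmulVr. Qed.

Lemma ginvK x : ginv (ginv x) = x.
Proof. exact: esym (ginv_uniq (gmulV x)). Qed.

Lemma ginv1 : ginv (@gone G) = gone.
Proof. exact: esym (ginv_uniq (gmul1 gone)). Qed.

Variable psi : G -> G.
Hypothesis psi_endo : is_endo psi.

Lemma endo1 : psi gone = gone.
Proof. by apply: (@gmulI (psi gone)); rewrite -psi_endo gmul1 gmulr1. Qed.

Lemma endoV x : psi (ginv x) = ginv (psi x).
Proof. by apply: ginv_uniq; rewrite -psi_endo gmulVr endo1. Qed.

Lemma iter_endo n : is_endo (iter n psi).
Proof. by move=> x y; elim: n => //= n ->; apply: psi_endo. Qed.

Lemma twisted_conj_refl x : twisted_conj psi x x.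
Proof. by exists gone; rewrite endo1 ginv1 gmul1 gmulr1. Qed.

Lemma twisted_conj_sym x y : twisted_conj psi x y -> twisted_conj psi y x.
Proof.
case=> g ->; exists (ginv g); rewrite endoV ginvK.
by rewrite !gmulA gmulV gmul1 -gmulA gmulV gmulr1.
Qed.

Lemma twisted_conj_trans x y z :
  twisted_conj psi x y -> twisted_conj psi y z -> twisted_conj psi x z.
Proof. by case=> g -> [h ->]; exists (gmul h g); rewrite psi_endo ginvM !gmulA. Qed.

Lemma twisted_conj_iter n x : twisted_conj psi x (iter n psi x).
Proof.
elim: n => [|n IH]; first exact: twisted_conj_refl.
apply: twisted_conj_trans IH _; exists (ginv (iter n psi x)).
by rewrite endoV ginvK gmulV gmul1.
Qed.

Lemma iter_twisted_conj n g x :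
  iter n psi (gmul (gmul g x) (ginv (psi g))) =
  gmul (gmul (iter n psi g) (iter n psi x)) (ginv (psi (iter n psi g))).
Proof. by elim: n => //= n ->; rewrite !psi_endo endoV. Qed.

End Groups.

Lemma iter_stable (T : Type) (P : T -> Prop) (f : T -> T) :
  (forall x, P x -> P (f x)) -> forall n x, P x -> P (iter n f x).
Proof. by move=> fP n x Px; elim: n => //= n; apply: fP. Qed.

Lemma iter_reach (T : Type) (P : T -> Prop) (f : T -> T) n :
  (0 < n)%N -> (forall x, P x -> P (f x)) -> (forall x, exists k, P (iter k f x)) ->
  forall x, exists k, P (iter k (iter n f) x).
Proof.
move=> n_gt0 fP f_reach x; have [k Pk] := f_reach x; exists k.
rewrite -iterM -(subnK (leq_pmulr k n_gt0)) iterD.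
exact: iter_stable.
Qed.

Section Restriction.
Variables (G : group) (H : G -> Prop) (H1 : H gone)
  (HM : forall x y, H x -> H y -> H (gmul x y)) (HV : forall x, H x -> H (ginv x)).
Variables (psi : G -> G) (psi_endo : is_endo psi) (psiH : forall x, H x -> H (psi x)).
Hypothesis psi_reach : forall x : G, exists n, H (iter n psi x).

Local Notation SH := (@subgroup G H H1 HM HV).
Local Notation psi_H := (@restrict G H H1 HM HV psi psiH).

Lemma restrict_endo : is_endo psi_H.
Proof. by move=> x y; apply: sub_eq; rewrite /= psi_endo. Qed.

Lemma val_iter_restrict n (x : SH) :
  proj1_sig (iter n psi_H x) = iter n psi (proj1_sig x).
Proof. by elim: n => //= n ->. Qed.

Lemma twisted_conj_val (a b : SH) :
  twisted_conj psi_H a b -> twisted_conj psi (proj1_sig a) (proj1_sig b).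
Proof. by case=> g ->; exists (proj1_sig g). Qed.

Lemma twisted_conj_restrict (a b : SH) :
  twisted_conj psi (proj1_sig a) (proj1_sig b) -> twisted_conj psi_H a b.
Proof.
case=> g eb; have [n Hg] := psi_reach g.
have E := restrict_endo.
have conj_iter : twisted_conj psi_H (iter n psi_H a) (iter n psi_H b).
  exists (exist _ (iter n psi g) Hg); apply: sub_eq.
  by rewrite /= !val_iter_restrict eb iter_twisted_conj.
apply: (twisted_conj_trans E (twisted_conj_iter E n a)).
apply: (twisted_conj_trans E conj_iter).
exact: (twisted_conj_sym E (twisted_conj_iter E n b)).
Qed.

Lemma twisted_class_meets_subgroup (x : G) :
  exists a : SH, twisted_conj psi (proj1_sig a) x.
Proof.
have [n Hn] := psi_reach x; exists (exist _ _ Hn).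
exact: (twisted_conj_sym psi_endo (twisted_conj_iter psi_endo n x)).
Qed.

Lemma reid_number_restrict : reid_number psi = reid_number psi_H.
Proof.
apply: eq_reid_number => n; rewrite /has_n_classes.
rewrite (card_eq_classesP (twisted_conj_refl psi_endo) (twisted_conj_sym psi_endo)
  (twisted_conj_trans psi_endo)).
rewrite (card_eq_classesP (twisted_conj_refl restrict_endo)
  (twisted_conj_sym restrict_endo) (twisted_conj_trans restrict_endo)).
symmetry; exact: (transversal_transfer (twisted_conj_sym psi_endo)
  (twisted_conj_trans psi_endo) twisted_conj_val twisted_conj_restrict
  twisted_class_meets_subgroup).
Qed.

Lemma iter_restrict n : iter n psi_H = @restrict G H H1 HM HV _ (iter_stable psiH n).
Proof.
by apply: functional_extensionality => x; apply: sub_eq; rewrite val_iter_restrict.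
Qed.

End Restriction.

Lemma exp_coef_ext (a b : nat -> rat) :
  (forall n, (0 < n)%N -> a n = b n) -> exp_coef a =1 exp_coef b.
Proof.
move=> eq_ab N; rewrite /exp_coef.
suff -> : log_poly a N = log_poly b N by [].
by apply: eq_big_nat => n /andP[n_gt0 _]; rewrite eq_ab.
Qed.

Theorem mainTheorem7 (G : group) (phi : G -> G) (Hendo : is_endo phi)
  (H : G -> Prop) (H1 : H gone)
  (HM : forall x y, H x -> H y -> H (gmul x y))
  (HV : forall x, H x -> H (ginv x))
  (Hphi : forall x, H x -> H (phi x))
  (Hreach : forall x : G, exists n : nat, H (iter n phi x)) :
  reid_number phi = reid_number (@restrict G H H1 HM HV phi Hphi)
  /\ ((forall n : nat, (0 < n)%N -> reid_number (iter n phi) <> None) ->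
      reid_zeta phi = reid_zeta (@restrict G H H1 HM HV phi Hphi)).
Proof.
split; first exact: reid_number_restrict.
move=> _; apply: functional_extensionality; apply: exp_coef_ext => n n_gt0.
rewrite iter_restrict -reid_number_restrict //.
- exact: iter_endo.
- exact: iter_reach.
Qed.
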